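(* In the VI setting below, let $u\in\mathbb{R}^n$ and $y=S(u)$, $q=u-Ay$. Then $S$ is (Fréchet) differentiable at $u$ if and only if $\mathcal K(y)=\{v\in\mathbb{R}^n: v_i=0 \text{ whenever } y_i=0\}$.
   Context: VI setting: $A\in\mathbb{R}^{n\times n}$ symmetric positive definite, $\|v\|_1=\sum_i|v_i|$. For $u\in\mathbb{R}^n$, $S(u)=y$ is the unique solution of $\langle Ay,v-y\rangle+\|v\|_1-\|y\|_1\ge\langle u,v-y\rangle$ for all $v\in\mathbb{R}^n$; equivalently there is $q\in\mathbb{R}^n$ with $Ay+q=u$, $y_iq_i=|y_i|$, $|q_i|\le1$ ($i=1,\dots,n$), and then $q=u-Ay$. Define $\mathcal K(y):=\{v\in\mathbb{R}^n: v_i=0 \text{ if } |q_i|<1;\ v_iq_i\ge0 \text{ if } y_i=0 \text{ and } |q_i|=1\}$. Known facts: $S$ is globally Lipschitz and directionally differentiable, and $\eta=S'(u;h)$ is the unique solution of $\eta\in\mathcal K(y)$, $\langle A\eta,v-\eta\rangle\ge\langle h,v-\eta\rangle$ for all $v\in\mathcal K(y)$. *)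

From mathcomp Require Import all_boot.
From Stdlib Require Import Reals.
Set Implicit Arguments.
Unset Strict Implicit.
Unset Printing Implicit Defensive.
Open Scope R_scope.

Definition vec (n : nat) := 'I_n -> R.
Definition mat (n : nat) := 'I_n -> 'I_n -> R.

Definition vsum n (f : 'I_n -> R) : R := \big[Rplus/R0]_(i < n) f i.

Definition dot n (x y : vec n) : R := vsum (fun i => x i * y i).
Definition norm1 n (x : vec n) : R := vsum (fun i => Rabs (x i)).
Definition mulv n (A : mat n) (x : vec n) : vec n := fun i => vsum (fun j => A i j * x j).
Definition vadd n (x y : vec n) : vec n := fun i => x i + y i.
Definition vsub n (x y : vec n) : vec n := fun i => x i - y i.

Definition mat_symmetric n (A : mat n) : Prop := forall i j, A i j = A j i.
Definition pos_def n (A : mat n) : Prop :=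
  forall v : vec n, (exists i, v i <> 0) -> dot v (mulv A v) > 0.

Definition VI_sol n (A : mat n) (u y : vec n) : Prop :=
  forall v : vec n,
    dot (mulv A y) (vsub v y) + norm1 v - norm1 y >= dot u (vsub v y).

Definition Kcone n (A : mat n) (u y : vec n) (v : vec n) : Prop :=
  let q := vsub u (mulv A y) in
  forall i, (Rabs (q i) < 1 -> v i = 0) /\
            (y i = 0 -> Rabs (q i) = 1 -> v i * q i >= 0).

(* Frechet differentiability of F : R^n -> R^n at u (w.r.t. the 1-norm;
   all norms on R^n are equivalent): there is a linear map, given by a
   matrix L, such that |F(u+h) - F(u) - L h| = o(|h|). *)
Definition frechet_diff n (F : vec n -> vec n) (u : vec n) : Prop :=
  exists L : mat n,
    forall eps, eps > 0 -> exists delta, delta > 0 /\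
      forall h : vec n, norm1 h < delta ->
        norm1 (vsub (vsub (F (vadd u h)) (F u)) (mulv L h)) <= eps * norm1 h.

From mathcomp Require Import all_boot all_algebra.
From mathcomp Require Import Rstruct.
From Stdlib Require Import Reals Lra Psatz.
Set Implicit Arguments.
Unset Strict Implicit.
Unset Printing Implicit Defensive.
Open Scope R_scope.

(* Write q = u - A y.  The VI holds iff q_i is a subgradient of |.| at y_i for
   every i, so K(y) is the subspace {v | v_i = 0 whenever y_i = 0} exactly
   under strict complementarity: |q_i| < 1 whenever y_i = 0.

   Under strict complementarity the zero set and the signs of y survive small
   perturbations of u, hence S is affine near u: S(u + h) = y + L h, where L h
   vanishes on {y_i = 0} and solves (A L h)_i = h_i off it (the reduced system
   is uniquely solvable because A is positive definite).

   Conversely, let y_i = 0 and q_i = s = +-1, and w = t s e_i with t > 0.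
   Then S(u + A w) = y + w, whereas S(u - A w) cannot be close to y - w: its
   i-th entry would have sign -s while its multiplier stays close to s.  So
   the second difference S(u + A w) + S(u - A w) - 2 S(u) is not o(t), and S
   is not differentiable at u. *)

Lemma vsum_ext n (f g : vec n) : (forall i, f i = g i) -> vsum f = vsum g.
Proof. by move=> fg; apply: eq_bigr => i _. Qed.

Lemma vsum_add n (f g : vec n) : vsum (fun i => f i + g i) = vsum f + vsum g.
Proof. exact: big_split. Qed.

Lemma vsum_sub n (f g : vec n) : vsum (fun i => f i - g i) = vsum f - vsum g.
Proof. exact: GRing.sumrB. Qed.

Lemma vsum_opp n (f : vec n) : vsum (fun i => - f i) = - vsum f.
Proof. exact: GRing.sumrN. Qed.

Lemma vsum_scal n (c : R) (f : vec n) : vsum (fun i => c * f i) = c * vsum f.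
Proof. symmetry; exact: GRing.mulr_sumr. Qed.

Lemma vsum_zero n (f : vec n) : (forall i, f i = 0) -> vsum f = 0.
Proof. by move=> f0; apply: big1 => i _. Qed.

Lemma vsum_single n (f : vec n) i : (forall j, j <> i -> f j = 0) -> vsum f = f i.
Proof.
by move=> f0; rewrite /vsum (bigD1 i) //= big1 ?Rplus_0_r // => j /eqP; apply: f0.
Qed.

Lemma vsum_le n (f g : vec n) : (forall i, f i <= g i) -> vsum f <= vsum g.
Proof. by move=> fg; rewrite /vsum; elim/big_ind2: _ => // *; lra. Qed.

Lemma vsum_ge0 n (f : vec n) : (forall i, 0 <= f i) -> 0 <= vsum f.
Proof. by move=> f0; rewrite /vsum; elim/big_ind: _ => // *; lra. Qed.

Lemma vsum_term_le n (f : vec n) i : (forall j, 0 <= f j) -> f i <= vsum f.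
Proof.
move=> f0; rewrite /vsum (bigD1 i) //= -[X in X <= _]Rplus_0_r.
by apply: Rplus_le_compat_l; elim/big_ind: _ => // *; lra.
Qed.

Lemma Rabs_vsum_le n (f : vec n) : Rabs (vsum f) <= vsum (fun i => Rabs (f i)).
Proof.
rewrite /vsum; elim/big_ind2: _ => [|x1 x2 y1 y2 le1 le2|]; last by move=> *; lra.
- by rewrite Rabs_R0; lra.
- by apply: Rle_trans (Rabs_triang _ _) _; lra.
Qed.

Lemma norm1_ge0 n (x : vec n) : 0 <= norm1 x.
Proof. by apply: vsum_ge0 => i; apply: Rabs_pos. Qed.

Lemma Rabs_le_norm1 n (x : vec n) i : Rabs (x i) <= norm1 x.
Proof. by apply: (vsum_term_le (f := fun j => Rabs (x j))) => j; apply: Rabs_pos. Qed.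

Lemma norm1_ext n (x y : vec n) : (forall i, x i = y i) -> norm1 x = norm1 y.
Proof. by move=> xy; apply: vsum_ext => i; rewrite xy. Qed.

Lemma norm1_add_le n (x y : vec n) : norm1 (vadd x y) <= norm1 x + norm1 y.
Proof. by rewrite /norm1 -vsum_add; apply: vsum_le => i; apply: Rabs_triang. Qed.

Lemma mulv_ext n (A : mat n) (x y : vec n) i :
  (forall j, x j = y j) -> mulv A x i = mulv A y i.
Proof. by move=> xy; apply: vsum_ext => j; rewrite xy. Qed.

Lemma mulv_add n (A : mat n) (x y : vec n) i :
  mulv A (vadd x y) i = mulv A x i + mulv A y i.
Proof. by rewrite /mulv -vsum_add; apply: vsum_ext => j; rewrite /vadd; ring. Qed.

Lemma mulv_sub n (A : mat n) (x y : vec n) i :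
  mulv A (vsub x y) i = mulv A x i - mulv A y i.
Proof. by rewrite /mulv -vsum_sub; apply: vsum_ext => j; rewrite /vsub; ring. Qed.

Lemma mulv_opp n (A : mat n) (x : vec n) i : mulv A (fun j => - x j) i = - mulv A x i.
Proof. by rewrite /mulv -vsum_opp; apply: vsum_ext => j; ring. Qed.

Definition mabs n (A : mat n) : R := vsum (fun i => vsum (fun j => Rabs (A i j))).

Lemma mabs_ge0 n (A : mat n) : 0 <= mabs A.
Proof. by apply: vsum_ge0 => i; apply: vsum_ge0 => j; apply: Rabs_pos. Qed.

Lemma Rabs_mulv_row_le n (A : mat n) (x : vec n) i :
  Rabs (mulv A x i) <= vsum (fun j => Rabs (A i j)) * norm1 x.
Proof.
apply: Rle_trans (Rabs_vsum_le _) _; rewrite Rmult_comm -vsum_scal.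
apply: vsum_le => j; rewrite Rabs_mult Rmult_comm.
by apply: Rmult_le_compat_r; [apply: Rabs_pos | apply: Rabs_le_norm1].
Qed.

Lemma Rabs_mulv_le n (A : mat n) (x : vec n) i : Rabs (mulv A x i) <= mabs A * norm1 x.
Proof.
apply: Rle_trans (Rabs_mulv_row_le _ _ _) _.
apply: Rmult_le_compat_r; first exact: norm1_ge0.
apply: (vsum_term_le (f := fun i => vsum (fun j => Rabs (A i j)))) => k.
by apply: vsum_ge0 => j; apply: Rabs_pos.
Qed.

Lemma norm1_mulv_le n (A : mat n) (x : vec n) : norm1 (mulv A x) <= mabs A * norm1 x.
Proof.
rewrite /mabs Rmult_comm -vsum_scal.
by apply: vsum_le => i; rewrite Rmult_comm; apply: Rabs_mulv_row_le.
Qed.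

Section MatrixInverse.
Local Open Scope ring_scope.
Import GRing.Theory.

Lemma mulv_mxE n (A : mat n) (x : vec n) i :
  mulv A x i = ((\matrix_(i, j) A i j) *m (\col_j x j)) i ord0.
Proof. by rewrite !mxE; apply: eq_bigr => j _; rewrite !mxE. Qed.

Lemma mat_right_inverse n (A : mat n) :
  (forall x : vec n, (forall i, mulv A x i = 0) -> forall i, x i = 0) ->
  exists X : mat n, forall x i, mulv A (mulv X x) i = x i.
Proof.
move=> A_inj; pose N := \matrix_(i, j) A i j.
have N_unit : N \in unitmx.
  rewrite -unitmx_tr unitmxE unitfE; apply/negP => /det0P [v v_neq0 vN0].
  case/eqP: v_neq0; apply/rowP => k; rewrite mxE; apply: A_inj => i.
  have := congr1 (fun M : 'M[R]_(1, n) => M ord0 i) vN0.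
  by rewrite !mxE => <-; apply: eq_bigr => j _; rewrite !mxE mulrC.
exists (fun i j => invmx N i j) => x i; rewrite mulv_mxE.
have -> : \col_j mulv (fun i j => invmx N i j) x j = invmx N *m \col_j x j.
  by apply/colP => j; rewrite !mxE; apply: eq_bigr => k _; rewrite !mxE.
by rewrite mulmxA mulmxV // mul1mx mxE.
Qed.

End MatrixInverse.

Lemma exists_lower_bound_pos n (g : 'I_n -> R) :
  (forall i, 0 < g i) -> exists rho, 0 < rho /\ forall i, rho <= g i.
Proof.
elim: n g => [|n IH] g g_pos; first by exists 1; split; [lra | case].
have [rho [rho_pos rho_le]] := IH (fun i => g (lift ord_max i)) (fun i => g_pos _).
exists (Rmin rho (g ord_max)); split; first exact: Rmin_pos.
move=> i; case: (unliftP ord_max i) => [j ->| ->]; last exact: Rmin_r.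
exact: Rle_trans (Rmin_l _ _) (rho_le j).
Qed.

Lemma locally_affine_frechet_diff n (F : vec n -> vec n) u (L : mat n) delta :
  0 < delta -> (forall h, norm1 h < delta -> forall j, F (vadd u h) j = F u j + mulv L h j) ->
  frechet_diff F u.
Proof.
move=> delta_pos affine; exists L => eps eps_pos; exists delta; split => // h h_small.
rewrite /norm1 vsum_zero; first by apply: Rmult_le_pos; [lra | apply: norm1_ge0].
by move=> j; rewrite /vsub affine // -Rabs_R0; congr Rabs; ring.
Qed.

Lemma frechet_diff_second_difference n (F : vec n -> vec n) u :
  frechet_diff F u -> forall eps, 0 < eps -> exists delta, 0 < delta /\
    forall h, norm1 h < delta ->
      norm1 (fun j => F (vadd u h) j + F (vsub u h) j - 2 * F u j) <= 2 * eps * norm1 h.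
Proof.
move=> [L HL] eps eps_pos; have [delta [delta_pos Hdelta]] := HL eps eps_pos.
exists delta; split => // h h_small.
have norm1_opp : norm1 (fun j => - h j) = norm1 h.
  by apply: vsum_ext => j; rewrite Rabs_Ropp.
have le_plus := Hdelta h h_small.
have le_minus := Hdelta (fun j => - h j) (ltac:(by rewrite norm1_opp)).
rewrite norm1_opp in le_minus; change (vsub u h) with (vadd u (fun j => - h j)).
rewrite (norm1_ext (y := vadd (vsub (vsub (F (vadd u h)) (F u)) (mulv L h))
    (vsub (vsub (F (vadd u (fun j => - h j))) (F u)) (mulv L (fun j => - h j))))).
  by apply: Rle_trans (norm1_add_le _ _) _; lra.
by move=> j; rewrite /vadd /vsub mulv_opp; ring.
Qed.

Lemma reduced_solution_map n (A : mat n) (J : 'I_n -> bool) : pos_def A ->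
  exists L : mat n, forall h j,
    (J j -> mulv L h j = 0) /\ (~~ J j -> mulv A (mulv L h) j = h j).
Proof.
move=> A_pd.
pose B : mat n := fun i j => if J i then (if i == j then 1 else 0) else if J j then 0 else A i j.
have B_J x i : J i -> mulv B x i = x i.
  move=> Ji; rewrite /mulv (vsum_single (i := i)) /B Ji ?eqxx; first ring.
  by move=> j /eqP; rewrite eq_sym => /negbTE ->; ring.
have B_notJ x i : (forall j, J j -> x j = 0) -> ~~ J i -> mulv B x i = mulv A x i.
  move=> x0 /negbTE Ji; apply: vsum_ext => j; rewrite /B Ji.
  by case Jj: (J j) => //; rewrite x0 //; ring.
have B_inj x : (forall i, mulv B x i = 0) -> forall i, x i = 0.
  move=> Bx0.
  have x0 j : J j -> x j = 0 by move=> Jj; rewrite -(B_J x j Jj).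
  have xAx0 : dot x (mulv A x) = 0.
    apply: vsum_zero => i; case Ji: (J i); first by rewrite x0 //; ring.
    by rewrite -(B_notJ x i x0) ?Ji // Bx0; ring.
  move=> i; case: (Req_dec (x i) 0) => // xi_neq0.
  by have := A_pd x (ex_intro _ i xi_neq0); lra.
have [X BX] := mat_right_inverse B_inj.
pose L : mat n := fun i j => if J j then 0 else X i j.
have BL h i : mulv B (mulv L h) i = if J i then 0 else h i.
  rewrite (@mulv_ext _ _ _ (mulv X (fun j => if J j then 0 else h j))) ?BX //.
  by move=> k; apply: vsum_ext => j; rewrite /L; case: (J j); ring.
have L_J h j : J j -> mulv L h j = 0 by move=> Jj; rewrite -(B_J _ j Jj) BL Jj.
exists L => h j; split; first exact: L_J.
by move=> nJj; rewrite -(B_notJ _ j (L_J h)) // BL (negbTE nJj).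
Qed.

Definition multiplier n (A : mat n) (u y : vec n) : vec n := vsub u (mulv A y).

Definition abs_subgradient (y q : R) : Prop :=
  (0 < y -> q = 1) /\ (y < 0 -> q = -1) /\ Rabs q <= 1.

Lemma abs_subgradientP y q :
  abs_subgradient y q <-> forall t, t * q <= Rabs (y + t) - Rabs y.
Proof.
split => [[pos [neg q_le1]] t | sub].
- case: (Rtotal_order y 0) => [y_neg | [-> | y_pos]].
  + by rewrite (neg y_neg); move: y_neg; split_Rabs; lra.
  + by rewrite Rplus_0_l Rabs_R0; move: q_le1; split_Rabs; nra.
  + by rewrite (pos y_pos); move: y_pos; split_Rabs; lra.
- have := sub 1; have := sub (-1); have := sub (- y); rewrite Rplus_opp_r Rabs_R0.
  move=> h3 h2 h1; split; [|split] => [y_pos | y_neg |]; move: h1 h2 h3; split_Rabs; nra.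
Qed.

Lemma abs_subgradient_neq0 y q : abs_subgradient y q -> y <> 0 -> Rabs q = 1.
Proof.
move=> [pos [neg _]] y_neq0; case: (Rtotal_order y 0) => [/neg | [// | /pos]] ->.
  by rewrite Rabs_Ropp Rabs_R1.
exact: Rabs_R1.
Qed.

Lemma abs_subgradient_scal t s : Rabs s = 1 -> 0 <= t -> abs_subgradient (t * s) s.
Proof.
move=> s1 t_ge0; have [-> | ->] : s = 1 \/ s = -1 by move: s1; split_Rabs; lra.
- by split; [|split] => *; rewrite ?Rabs_R1; lra.
- by split; [|split] => *; rewrite ?Rabs_Ropp ?Rabs_R1; lra.
Qed.

Lemma abs_subgradient_perturb y y' q :
  abs_subgradient y q -> Rabs (y' - y) < Rabs y -> abs_subgradient y' q.
Proof.
move=> [pos [neg q_le1]] close; split; [|split] => // y'_sgn.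
- by apply: pos; move: close y'_sgn; split_Rabs; lra.
- by apply: neg; move: close y'_sgn; split_Rabs; lra.
Qed.

Definition basisv n (i : 'I_n) (t : R) : vec n := fun j => if j == i then t else 0.

Lemma VI_solE n (A : mat n) u y :
  VI_sol A u y <-> forall i, abs_subgradient (y i) (multiplier A u y i).
Proof.
split => [VI i | sub v].
- apply/abs_subgradientP => t; have := VI (vadd y (basisv i t)).
  have dot_e w : dot w (vsub (vadd y (basisv i t)) y) = w i * t.
    rewrite /dot (vsum_single (i := i)) /vsub /vadd /basisv ?eqxx; first ring.
    by move=> j /eqP /negbTE ->; ring.
  have norm1_e : norm1 (vadd y (basisv i t)) - norm1 y = Rabs (y i + t) - Rabs (y i).
    rewrite /norm1 -vsum_sub (vsum_single (i := i)) /vadd /basisv ?eqxx //.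
    by move=> j /eqP /negbTE ->; rewrite Rplus_0_r; ring.
  by rewrite !dot_e /multiplier /vsub; lra.
- have lin : dot u (vsub v y) - dot (mulv A y) (vsub v y) =
             vsum (fun i => (v i - y i) * multiplier A u y i).
    by rewrite /dot -vsum_sub; apply: vsum_ext => i; rewrite /multiplier /vsub; ring.
  have nrm : norm1 v - norm1 y = vsum (fun i => Rabs (v i) - Rabs (y i)).
    by rewrite /norm1 -vsum_sub.
  suff : vsum (fun i => (v i - y i) * multiplier A u y i) <=
         vsum (fun i => Rabs (v i) - Rabs (y i)) by lra.
  apply: vsum_le => i; have := proj1 (abs_subgradientP _ _) (sub i) (v i - y i).
  by rewrite Rplus_minus.
Qed.

Lemma VI_sol_unique n (A : mat n) u y1 y2 : pos_def A ->
  VI_sol A u y1 -> VI_sol A u y2 -> forall i, y1 i = y2 i.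
Proof.
move=> A_pd VI1 VI2; have := VI1 y2; have := VI2 y1.
have quad : dot (mulv A y1) (vsub y2 y1) + dot (mulv A y2) (vsub y1 y2) =
            - dot (vsub y1 y2) (mulv A (vsub y1 y2)).
  by rewrite /dot -vsum_add -vsum_opp; apply: vsum_ext => i; rewrite mulv_sub /vsub; ring.
have lin : dot u (vsub y2 y1) + dot u (vsub y1 y2) = 0.
  by rewrite /dot -vsum_add; apply: vsum_zero => i; rewrite /vsub; ring.
move=> le1 le2 i; apply: Rminus_diag_uniq; case: (Req_dec (y1 i - y2 i) 0) => // neq.
by have := A_pd (vsub y1 y2) (ex_intro _ i neq); lra.
Qed.

Lemma VI_sol_translate n (A : mat n) u y w :
  (forall i, abs_subgradient (y i + w i) (multiplier A u y i)) ->
  VI_sol A (vadd u (mulv A w)) (vadd y w).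
Proof.
move=> sub; apply/VI_solE => i.
suff -> : multiplier A (vadd u (mulv A w)) (vadd y w) i = multiplier A u y i by apply: sub.
by rewrite /multiplier /vsub /vadd mulv_add; ring.
Qed.

Lemma VI_sol_perturb n (A : mat n) u y h d :
  VI_sol A u y ->
  (forall j, y j = 0 ->
     d j = 0 /\ Rabs (multiplier A u y j) + Rabs (h j - mulv A d j) <= 1) ->
  (forall j, y j <> 0 -> mulv A d j = h j /\ Rabs (d j) < Rabs (y j)) ->
  VI_sol A (vadd u h) (vadd y d).
Proof.
move=> /VI_solE sub zero nonzero; apply/VI_solE => j.
have -> : multiplier A (vadd u h) (vadd y d) j = multiplier A u y j + (h j - mulv A d j).
  by rewrite /multiplier /vsub /vadd mulv_add; ring.
case: (Req_dec (y j) 0) => [yj0 | yj_neq0].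
- have [dj0 small] := zero j yj0.
  rewrite /vadd yj0 dj0 Rplus_0_r; split; [lra | split; [lra |]].
  exact: Rle_trans (Rabs_triang _ _) small.
- have [-> close] := nonzero j yj_neq0.
  rewrite Rminus_diag Rplus_0_r; apply: (abs_subgradient_perturb (sub j)).
  by rewrite /vadd Rplus_minus_l.
Qed.

Lemma VI_sol_reflection_far n (A : mat n) u y z i s t :
  y i = 0 -> multiplier A u y i = s -> Rabs s = 1 -> 0 < t ->
  VI_sol A (vsub u (mulv A (basisv i (t * s)))) z ->
  norm1 (vadd (vsub z y) (basisv i (t * s))) < t ->
  1 <= mabs A * norm1 (vadd (vsub z y) (basisv i (t * s))).
Proof.
move=> yi0 qi s1 t_pos /VI_solE sub_z.
set w := basisv i (t * s); set r := vadd (vsub z y) w => r_small.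
have zi : z i = r i - t * s by rewrite /r /vadd /vsub /w /basisv eqxx yi0; ring.
have qzi : multiplier A (vsub u (mulv A w)) z i = s - mulv A r i.
  by rewrite -qi /r /multiplier /vsub mulv_add mulv_sub; ring.
have ri_lt : Rabs (r i) < t := Rle_lt_trans _ _ _ (Rabs_le_norm1 r i) r_small.
have [pos [neg _]] := sub_z i; rewrite qzi in pos neg.
have Ar_le := Rabs_mulv_le A r i.
have [s_val | s_val] : s = 1 \/ s = -1 by move: s1; split_Rabs; lra.
- have := neg (ltac:(move: ri_lt; rewrite zi s_val; split_Rabs; lra)).
  by rewrite s_val; move: Ar_le; split_Rabs; lra.
- have := pos (ltac:(move: ri_lt; rewrite zi s_val; split_Rabs; lra)).
  by rewrite s_val; move: Ar_le; split_Rabs; lra.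
Qed.

Definition strict_complementarity n (A : mat n) (u y : vec n) : Prop :=
  forall i, y i = 0 -> Rabs (multiplier A u y i) < 1.

Lemma Kcone_eq_subspace n (A : mat n) u y : VI_sol A u y ->
  (forall v, Kcone A u y v <-> (forall i, y i = 0 -> v i = 0)) <->
  strict_complementarity A u y.
Proof.
move=> /VI_solE sub; split => [Kspan i yi0 | strict v].
- case: (Rlt_le_dec (Rabs (multiplier A u y i)) 1) => // q_ge1; exfalso.
  set s := multiplier A u y i in q_ge1.
  have s_neq0 : s <> 0 by move=> s0; move: q_ge1; rewrite s0 Rabs_R0; lra.
  apply: s_neq0; have := proj1 (Kspan (basisv i s)) _ i yi0; rewrite /basisv eqxx; apply.
  rewrite /Kcone -/(multiplier A u y) => k; case: (eqVneq k i) => [-> | _]; split => //.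
  + by move=> q_lt1; exfalso; apply: (Rle_not_lt _ _ q_ge1 q_lt1).
  + by move=> _ _; apply: Rle_ge; apply: (Rle_0_sqr s).
  + by move=> _ _; rewrite Rmult_0_l; lra.
- split => [Kv i yi0 | v0]; first exact: (proj1 (Kv i) (strict i yi0)).
  rewrite /Kcone -/(multiplier A u y) => k; split => [q_lt1 | yk0 _]; last by rewrite (v0 k yk0); lra.
  apply: v0; case: (Req_dec (y k) 0) => // yk_neq0.
  by have := abs_subgradient_neq0 (sub k) yk_neq0; lra.
Qed.

Lemma exists_small_step c delta :
  0 <= c -> 0 < delta -> exists t, 0 < t /\ t <= 1 /\ c * t < delta.
Proof.
move=> c0 delta_pos; exists (Rmin 1 (delta / (c + 1)) / 2).
have := Rmin_l 1 (delta / (c + 1)); have := Rmin_r 1 (delta / (c + 1)).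
have : 0 < Rmin 1 (delta / (c + 1)) by apply: Rmin_pos; [lra | apply: Rdiv_lt_0_compat; lra].
have : delta / (c + 1) * (c + 1) = delta by field; lra.
set m := Rmin _ _; nra.
Qed.

Section Differentiability.

Variables (n : nat) (A : mat n) (S : vec n -> vec n).
Hypotheses (A_pd : pos_def A) (S_sol : forall u, VI_sol A u (S u)).
Variable u : vec n.

Lemma strict_complementarity_frechet_diff :
  strict_complementarity A u (S u) -> frechet_diff S u.
Proof.
move=> strict; set y := S u in strict *.
have [L HL] := reduced_solution_map (fun i => y i == 0) A_pd.
pose margin i := if y i == 0 then 1 - Rabs (multiplier A u y i) else Rabs (y i).
have [rho [rho_pos rho_le]] : exists rho, 0 < rho /\ forall i, rho <= margin i.
  apply: exists_lower_bound_pos => i; rewrite /margin.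
  by case: eqP => [/strict | /Rabs_pos_lt]; lra.
have KL0 := mabs_ge0 L; have KA0 := mabs_ge0 A; have := Rmult_le_pos _ _ KA0 KL0.
set K := 1 + mabs L + mabs A * mabs L => KAL0.
have K_pos : 0 < K by rewrite /K; lra.
apply: (@locally_affine_frechet_diff _ _ _ L (rho / K)); first exact: Rdiv_lt_0_compat.
move=> h h_small.
have h_ge0 := norm1_ge0 h.
have Kh_lt : K * norm1 h < rho.
  by rewrite (_ : rho = K * (rho / K)); [apply: Rmult_lt_compat_l | field; lra].
set d := mulv L h.
have d_le j : Rabs (d j) <= mabs L * norm1 h by apply: Rabs_mulv_le.
have Ad_le j : Rabs (mulv A d j) <= mabs A * (mabs L * norm1 h).
  apply: Rle_trans (Rabs_mulv_le _ _ _) _.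
  by apply: Rmult_le_compat_l => //; apply: norm1_mulv_le.
suff sol : VI_sol A (vadd u h) (vadd y d) by move=> j; apply: VI_sol_unique A_pd (S_sol _) sol j.
have KLh0 := Rmult_le_pos _ _ KL0 h_ge0.
apply: VI_sol_perturb (S_sol u) _ _ => j; have := rho_le j; rewrite /margin -/y.
- case: eqP => [yj0 margin_j _ | yj_neq0 _ /yj_neq0 []].
  split; first by apply: (proj1 (HL h j)); apply/eqP.
  have := Rabs_le_norm1 h j; have := Ad_le j.
  have : K * norm1 h = norm1 h + mabs L * norm1 h + mabs A * (mabs L * norm1 h).
    by rewrite /K; ring.
  have : Rabs (h j - mulv A d j) <= Rabs (h j) + Rabs (mulv A d j) by split_Rabs; lra.
  lra.
- case: eqP => [yj0 _ /(_ yj0) [] | yj_neq0 margin_j _].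
  split; first by apply: (proj2 (HL h j)); apply/eqP.
  have := d_le j; have : mabs L * norm1 h <= K * norm1 h by rewrite /K; nra.
  lra.
Qed.

Lemma S_translate_active i s t :
  S u i = 0 -> multiplier A u (S u) i = s -> Rabs s = 1 -> 0 <= t ->
  forall j, S (vadd u (mulv A (basisv i (t * s)))) j = S u j + basisv i (t * s) j.
Proof.
move=> yi0 qi s1 t_ge0 j; have /VI_solE sub := S_sol u.
apply: VI_sol_unique A_pd (S_sol _) (VI_sol_translate _) j => k.
rewrite /basisv; case: eqP => [-> | _]; last by rewrite Rplus_0_r; apply: sub.
by rewrite yi0 Rplus_0_l qi; apply: abs_subgradient_scal.
Qed.

Lemma frechet_diff_strict_complementarity :
  frechet_diff S u -> strict_complementarity A u (S u).
Proof.
move=> diff i yi0; have /VI_solE sub := S_sol u.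
case: (Rlt_le_dec (Rabs (multiplier A u (S u) i)) 1) => // q_ge1; exfalso.
set s := multiplier A u (S u) i in q_ge1.
have s1 : Rabs s = 1 by have [_ [_]] := sub i; rewrite -/s; lra.
set KA := mabs A; have KA0 : 0 <= KA := mabs_ge0 A.
(* eps makes the remainder r below satisfy norm1 r < t and KA * norm1 r < 1. *)
set eps := / (4 * (KA + 1) * (KA + 1)).
have eps_pos : 0 < eps by apply: Rinv_0_lt_compat; nra.
have eps_eq : eps * (4 * (KA + 1) * (KA + 1)) = 1 by apply: Rinv_l; nra.
have [epsKA epsKA2] : 2 * eps * KA <= 1 / 2 /\ 2 * eps * KA * KA <= 1 / 2.
  have := Rmult_le_pos eps (KA * KA + KA + 1); have := Rmult_le_pos eps (2 * KA + 1).
  by split; nra.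
have [delta [delta_pos second]] := frechet_diff_second_difference diff eps_pos.
have [t [t_pos [t_le1 KAt_lt]]] := exists_small_step KA0 delta_pos.
set w := basisv i (t * s); set h := mulv A w.
have norm1_w : norm1 w = t.
  rewrite /norm1 (vsum_single (i := i)) /w /basisv ?eqxx.
    by rewrite Rabs_mult s1 Rmult_1_r Rabs_right //; lra.
  by move=> j /eqP /negbTE ->; rewrite Rabs_R0.
have h_le : norm1 h <= KA * t by rewrite -norm1_w; apply: norm1_mulv_le.
have S_plus := S_translate_active yi0 (erefl s) s1 (Rlt_le _ _ t_pos).
set r := vadd (vsub (S (vsub u h)) (S u)) w.
have r_le : norm1 r <= 2 * eps * (KA * t).
  have := second h (Rle_lt_trans _ _ _ h_le KAt_lt).
  rewrite (norm1_ext (y := r)) => [r_le|j]; last by rewrite S_plus -/w /r /vadd /vsub; ring.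
  by apply: Rle_trans r_le _; apply: Rmult_le_compat_l; lra.
have r_lt : norm1 r < t by nra.
have := VI_sol_reflection_far yi0 (erefl s) s1 t_pos (S_sol (vsub u h)) r_lt.
rewrite -/w -/r -/KA; have := Rmult_le_compat_l KA _ _ KA0 r_le.
have := Rmult_le_compat_r t _ _ (Rlt_le _ _ t_pos) epsKA2.
lra.
Qed.

End Differentiability.

Theorem lemma4p1 (n : nat) (A : mat n) (S : vec n -> vec n)
  (hsym : mat_symmetric A) (hpd : pos_def A)
  (hS : forall u : vec n, VI_sol A u (S u))
  (u : vec n) :
  frechet_diff S u <->
  (forall v : vec n, Kcone A u (S u) v <-> (forall i, S u i = 0 -> v i = 0)).
Proof.
have Kcone_strict := Kcone_eq_subspace (hS u).
split => [diff | Kspan].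
- exact/Kcone_strict/(frechet_diff_strict_complementarity hpd hS).
- exact/(strict_complementarity_frechet_diff hpd hS)/Kcone_strict.
Qed.
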